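(* (i) There exists a doubly stochastic $2\times 2$ matrix $\mathcal N$ (for instance $\mathcal N=\frac19\begin{pmatrix}5&4\\4&5\end{pmatrix}$) such that for every $\kappa>\frac89$, no directed $3$-regular multigraph on $[2]$ has weak throughput at least $\kappa$ with respect to $\mathcal N$. (ii) For every positive integer $n$ there exists a doubly stochastic $n\times n$ matrix $\mathcal M_n$ such that no directed $(2n-1)$-regular multigraph on $[n]$ has weak direct throughput at least $\kappa$ with respect to $\mathcal M_n$, for every $\kappa>\frac{7n-4}{8n-4}$ if $n$ is even and for every $\kappa>\frac{7n-3}{8n-4}$ if $n$ is odd.
   Context: Let $n\ge 1$ and $[n]=\{1,\dots,n\}$. Networks are finite directed multigraphs on vertex set $[n]$; self-loops and parallel arcs are allowed. A directed multigraph is directed $r$-regular if every vertex has exactly $r$ outgoing and exactly $r$ incoming arcs (a self-loop at $v$ counts as one outgoing and one incoming arc of $v$). A path is a non-empty sequence of arcs $((u_1,v_1),\dots,(u_\ell,v_\ell))$ with $v_i=u_{i+1}$ for $i<\ell$; it goes from $u_1$ to $v_\ell$ and has length $\ell\ge 1$. An $n\times n$ matrix is doubly stochastic if all entries are nonnegative and every row and every column sums to $1$. In a directed $(2n-1)$-regular multigraph $G$ on $[n]$ every arc has capacity $\frac{1}{2n-1}$. $G$ hosts a nonnegative $n\times n$ matrix $\mathcal M=(a_{i,j})$ if there is a finite collection $\{(P_k,d_k)\}$, where each $P_k$ is a path in $G$ from some $s_k$ to some $t_k$ and $d_k\ge 0$, such that $\sum_{k:\,s_k=u,\,t_k=v}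 d_k=a_{u,v}$ for all $u,v\in[n]$, and for every arc $e$ of $G$ (parallel arcs are distinct) $\sum_{k:\,e\in P_k} d_k\le \frac{1}{2n-1}$. $G$ directly hosts $\mathcal M$ if this is possible with all paths $P_k$ of length $1$. For doubly stochastic $\mathcal M=(a_{i,j})$, the weak throughput (resp. weak direct throughput) of $G$ is the largest $\eta$ such that $G$ hosts (resp. directly hosts) some matrix $\mathcal M'=(a'_{i,j})$ with $0\le a'_{i,j}\le a_{i,j}$ for all $i,j$ and $\sum_{i,j}a'_{i,j}=\eta\sum_{i,j}a_{i,j}=\eta n$. *)

From HB Require Import structures.
From mathcomp Require Import all_boot all_order all_algebra.
From mathcomp Require Import boolp classical_sets reals.
Set Implicit Arguments. Unset Strict Implicit. Unset Printing Implicit Defensive.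
Import Order.TTheory GRing.Theory Num.Theory.
Local Open Scope ring_scope.

(* A finite directed multigraph on [n] = 'I_n : arcs are 'I_(narcs G),
   each with a source and a target (self-loops, parallel arcs allowed). *)
Record multigraph (n : nat) := Multigraph {
  narcs : nat;
  src : 'I_narcs -> 'I_n;
  tgt : 'I_narcs -> 'I_n }.

Definition arc n (G : multigraph n) := 'I_(narcs G).

Definition directed_regular n (G : multigraph n) (r : nat) : Prop :=
  forall v : 'I_n,
    #|[set e : arc G | src e == v]| = r /\ #|[set e : arc G | tgt e == v]| = r.

(* A path is a non-empty sequence of arcs e :: p with tgt of each arc equal
   to the src of the next one. *)
Definition is_gpath n (G : multigraph n) (e : arc G) (p : seq (arc G)) : bool :=
  path [rel x y | tgt x == src y] e p.

Definition doubly_stochastic (R : numDomainType) n (A : 'M[R]_n) : Prop :=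
  (forall i j, 0 <= A i j) /\
  (forall i, \sum_j A i j = 1) /\ (forall j, \sum_i A i j = 1).

(* A routing: finite collection of (path, demand) triples ((e, p), d)
   representing path e :: p with weight d. *)
Definition routing_ok (R : realDomainType) n (G : multigraph n)
    (s : seq ((arc G * seq (arc G)) * R)) (A : 'M[R]_n) : Prop :=
  (forall k, k \in s -> is_gpath k.1.1 k.1.2 /\ 0 <= k.2) /\
  (forall u v : 'I_n,
     \sum_(k <- s | (src k.1.1 == u) && (tgt (last k.1.1 k.1.2) == v)) k.2
       = A u v) /\
  (forall e : arc G,
     \sum_(k <- s | e \in k.1.1 :: k.1.2) k.2 <= ((2 * n - 1)%N%:R)^-1).

Definition hosts (R : realDomainType) n (G : multigraph n) (A : 'M[R]_n) : Prop :=
  exists s : seq ((arc G * seq (arc G)) * R), routing_ok s A.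

Definition directly_hosts (R : realDomainType) n (G : multigraph n)
    (A : 'M[R]_n) : Prop :=
  exists s : seq ((arc G * seq (arc G)) * R), routing_ok s A /\ (forall k, k \in s -> k.1.2 = [::]).

Definition achievable_with (R : realDomainType) n
    (host : 'M[R]_n -> Prop) (M : 'M[R]_n) (eta : R) : Prop :=
  exists A : 'M[R]_n,
    (forall i j, 0 <= A i j <= M i j) /\
    \sum_i \sum_j A i j = eta * \sum_i \sum_j M i j /\ host A.

Definition weak_throughput (R : realType) n (G : multigraph n) (M : 'M[R]_n) : R :=
  sup [set eta | achievable_with (@hosts R n G) M eta].

Definition weak_direct_throughput (R : realType) n (G : multigraph n)
    (M : 'M[R]_n) : R :=
  sup [set eta | achievable_with (@directly_hosts R n G) M eta].

(* Both bounds come from weak duality for the path-routing LP.  If arc costs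
   [y >= 0] and pair costs [mu] make every path from [u] to [v] cost at least
   [1 - mu u v], then any hosted matrix [A] has total at most
   [sum_e y e / (2n-1) + sum_(u,v) mu u v * A u v].
   For [n = 2], a 3-regular graph with [c] loops at vertex 0 also has [c] loops
   at vertex 1 and [3 - c] arcs in each direction.  If [c <= 1], charge loops 1
   and the remaining arcs and the off-diagonal pairs 1/2; otherwise charge the
   non-loop arcs and the diagonal pairs 1.  Either way at most 16/9 of the total
   2 of [(5 4; 4 5)/9] is hosted.
   With direct routing the demand on [(u,v)] is at most [mult G u v / (2n-1)].
   Take the matrix with diagonal [(3n-1)/(2(2n-1))] and off-diagonal entries
   [1/(2(2n-1))].  Scaled by [2n-1], row [u] receives at most
   [min(c, (3n-1)/2)] from the [c] loops at [u] and [1/2] from each of the at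
   most [2n-1-c] other out-neighbours; since [c] and the number of neighbours
   are integers, four times this is at most [7n-3] ([n] odd) or [7n-4]
   ([n] even). *)

From Pilot Require Import Defs.
From HB Require Import structures.
From mathcomp Require Import all_boot all_order all_algebra.
From mathcomp Require Import boolp classical_sets reals.
From mathcomp Require Import ring lra zify.
Import Order.TTheory GRing.Theory Num.Theory.
Local Open Scope ring_scope.
Set Implicit Arguments. Unset Strict Implicit.
(* [path] also exports a function named [arc]. *)
Local Notation arc := Defs.arc.

Section NonnegativeSums.
Variable R : numDomainType.

Lemma ler_sum_seq_subpred (I : eqType) (r : seq I) (P Q : pred I) (F : I -> R) :
  {in r, forall i, 0 <= F i} -> {in r, subpred P Q} ->
  \sum_(i <- r | P i) F i <= \sum_(i <- r | Q i) F i.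
Proof.
move=> F0 PQ; rewrite [leLHS]big_mkcond [leRHS]big_mkcond.
rewrite big_seq [leRHS]big_seq; apply: ler_sum => i ri.
have [Pi|_] := boolP (P i); first by rewrite (PQ i ri Pi).
by case: ifP => // _; apply: F0.
Qed.

Lemma ler_sum_mem (T : finType) (L : {pred T}) (F : T -> R) x :
  (forall i, 0 <= F i) -> x \in L -> F x <= \sum_(i in L) F i.
Proof. by move=> F0 xL; rewrite (bigD1 x) //= lerDl sumr_ge0. Qed.

Lemma ler_sum_mem2 (T : finType) (L : {pred T}) (F : T -> R) x y :
  (forall i, 0 <= F i) -> x \in L -> y \in L -> y != x ->
  F x + F y <= \sum_(i in L) F i.
Proof.
move=> F0 xL yL yx; rewrite (bigD1 x) //= lerD2l (bigD1 y) /=; last by rewrite yL.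
by rewrite lerDl sumr_ge0.
Qed.

End NonnegativeSums.

Definition mult n (G : multigraph n) (u v : 'I_n) : nat :=
  #|[set e : arc G | (src e == u) && (tgt e == v)]|.

Lemma card_out_arcs n (G : multigraph n) u :
  #|[set e : arc G | src e == u]| = (\sum_v mult G u v)%N.
Proof.
rewrite -sum1_card (partition_big (@tgt n G) xpredT) //=.
by apply: eq_bigr => v _; rewrite /mult -sum1_card; apply: eq_bigl => e; rewrite !inE.
Qed.

Lemma card_in_arcs n (G : multigraph n) v :
  #|[set e : arc G | tgt e == v]| = (\sum_u mult G u v)%N.
Proof.
rewrite -sum1_card (partition_big (@src n G) xpredT) //=.
by apply: eq_bigr => u _; rewrite /mult -sum1_card; apply: eq_bigl => e; rewrite !inE andbC.
Qed.

Definition arc_weight (T : Type) n (G : multigraph n) (Y : 'I_n -> 'I_n -> T)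
  (e : arc G) : T := Y (src e) (tgt e).

Lemma sum_arc_weight (R : pzSemiRingType) n (G : multigraph n)
    (Y : 'I_n -> 'I_n -> R) :
  \sum_(e : arc G) arc_weight Y e = \sum_u \sum_v (mult G u v)%:R * Y u v.
Proof.
rewrite (partition_big (@src n G) xpredT) //; apply: eq_bigr => u _.
rewrite (partition_big (@tgt n G) xpredT) //; apply: eq_bigr => v _.
rewrite mulr_natl -sumr_const; apply: eq_big => [e|e /andP[/andP[_ /eqP<- /eqP<-]]] //.
by rewrite !inE.
Qed.

Lemma last_gpath_loops n (G : multigraph n) (e : arc G) p :
  is_gpath e p -> all (fun x => src x == tgt x) (e :: p) ->
  tgt (last e p) = src e.
Proof.
elim: p e => [|f p IH] e /=; first by rewrite andbT => _ /eqP.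
move=> /andP[/eqP ef pf] /andP[/eqP ee fp].
by rewrite IH // -ef ee.
Qed.

Section Routing.
Variables (R : realFieldType) (n : nat) (G : multigraph n).

Local Notation route := ((arc G * seq (arc G)) * R)%type.

Definition path_cost (y : arc G -> R) (e : arc G) (p : seq (arc G)) : R :=
  \sum_(x in e :: p) y x.

Definition dual_feasible (y : arc G -> R) (mu : 'I_n -> 'I_n -> R) : Prop :=
  (forall e, 0 <= y e) /\
  forall e p, is_gpath e p -> 1 <= path_cost y e p + mu (src e) (tgt (last e p)).

Lemma routing_weighted_demand (s : seq route) (A : 'M[R]_n) (F : 'I_n -> 'I_n -> R) :
  routing_ok s A ->
  \sum_u \sum_v F u v * A u v =
  \sum_(k <- s) F (src k.1.1) (tgt (last k.1.1 k.1.2)) * k.2.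
Proof.
case=> _ [dem _].
rewrite (partition_big (fun k : route => src k.1.1) xpredT) //; apply: eq_bigr => u _.
rewrite (partition_big (fun k : route => tgt (last k.1.1 k.1.2)) xpredT) //.
apply: eq_bigr => v _; rewrite -dem mulr_sumr.
by apply: eq_big => [k|k /= /andP[/eqP-> /eqP->]].
Qed.

Lemma routing_cost_le (s : seq route) (A : 'M[R]_n) y :
  routing_ok s A -> (forall e, 0 <= y e) ->
  \sum_(k <- s) path_cost y k.1.1 k.1.2 * k.2 <= (\sum_e y e) / (2 * n - 1)%N%:R.
Proof.
case=> _ [_ cap] y0.
under eq_bigr do rewrite /path_cost big_mkcond mulr_suml.
rewrite exchange_big mulr_suml; apply: ler_sum => e _ /=.
rewrite (_ : \sum_(k <- s) _ = y e * \sum_(k <- s | e \in k.1.1 :: k.1.2) k.2).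
  by rewrite ler_wpM2l.
rewrite mulr_sumr [RHS]big_mkcond; apply: eq_bigr => k _.
by case: ifP; rewrite ?mul0r ?mulr0.
Qed.

Lemma hosted_total_le_dual (A : 'M[R]_n) y mu :
  hosts G A -> dual_feasible y mu ->
  \sum_u \sum_v A u v <=
  (\sum_e y e) / (2 * n - 1)%N%:R + \sum_u \sum_v mu u v * A u v.
Proof.
move=> [s ro] [y0 feas].
have -> : \sum_u \sum_v A u v = \sum_u \sum_v 1 * A u v.
  by apply: eq_bigr => u _; apply: eq_bigr => v _; rewrite mul1r.
rewrite (routing_weighted_demand (fun _ _ => 1) ro) (routing_weighted_demand mu ro).
apply: le_trans (lerD (routing_cost_le ro y0) (lexx _)).
rewrite -big_split /= big_seq [leRHS]big_seq; apply: ler_sum => k ks.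
have [pk wk] := ro.1 k ks.
by rewrite -mulrDl ler_wpM2r // feas.
Qed.

Definition halving_arc_cost (u v : 'I_n) : R := if u == v then 1 else 2^-1.
Definition halving_pair_cost (u v : 'I_n) : R := if u == v then 0 else 2^-1.
Definition cross_arc_cost (u v : 'I_n) : R := if u == v then 0 else 1.
Definition diag_pair_cost (u v : 'I_n) : R := if u == v then 1 else 0.

Lemma dual_feasible_halving :
  dual_feasible (arc_weight halving_arc_cost) halving_pair_cost.
Proof.
set y := arc_weight halving_arc_cost.
have y0 e : 0 <= y e by rewrite /y /arc_weight /halving_arc_cost; case: ifP => _; lra.
split=> // e p _; rewrite /halving_pair_cost.
have head_le : y e <= path_cost y e p := ler_sum_mem y0 (mem_head e p).
have [he|he] := boolP (src e == tgt e).
  have : y e = 1 by rewrite /y /arc_weight /halving_arc_cost he.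
  by case: ifP => _; lra.
have ye : y e = 2^-1 by rewrite /y /arc_weight /halving_arc_cost (negbTE he).
have [hl|hl] := boolP (src e == tgt (last e p)); last by lra.
have lst : last e p != e by apply: contraNneq he => lste; rewrite {1}(eqP hl) lste.
have := ler_sum_mem2 y0 (mem_head e p) (mem_last e p) lst.
have : 2^-1 <= y (last e p).
  by rewrite /y /arc_weight /halving_arc_cost; case: ifP => _; lra.
by rewrite /path_cost; lra.
Qed.

Lemma dual_feasible_cross :
  dual_feasible (arc_weight cross_arc_cost) diag_pair_cost.
Proof.
set y := arc_weight cross_arc_cost.
have y0 e : 0 <= y e by rewrite /y /arc_weight /cross_arc_cost; case: ifP => _; lra.
split=> // e p pth; rewrite /diag_pair_cost.
have [hl|hl] := boolP (src e == tgt (last e p)).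
  have : 0 <= path_cost y e p by apply: sumr_ge0 => x _; apply: y0.
  lra.
rewrite addr0.
have [/allPn[x xp hx]|] := boolP (~~ all (fun x => src x == tgt x) (e :: p)).
  by have := ler_sum_mem y0 xp; rewrite /y /arc_weight /cross_arc_cost (negbTE hx).
by rewrite negbK => /(last_gpath_loops pth) lst; rewrite lst eqxx in hl.
Qed.

Lemma direct_demand_le_mult (A : 'M[R]_n) u v :
  directly_hosts G A -> A u v <= (mult G u v)%:R / (2 * n - 1)%N%:R.
Proof.
move=> [s [[pos [dem cap]] direct]].
pose uv := [set e : arc G | (src e == u) && (tgt e == v)].
have -> : A u v = \sum_(k <- s | k.1.1 \in uv) k.2.
  rewrite -dem big_seq_cond [RHS]big_seq_cond; apply: eq_bigl => k.
  by have [ks|] := boolP (k \in s); rewrite ?andbF //= (direct k ks) inE.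
rewrite (partition_big (fun k : route => k.1.1) (fun e => e \in uv)) //.
rewrite /mult -/uv mulr_natl -sumr_const; apply: ler_sum => e _.
apply: le_trans (cap e); apply: ler_sum_seq_subpred => [k ks|k _ /andP[_ /eqP<-]].
  exact: (pos k ks).2.
exact: mem_head.
Qed.

End Routing.

Lemma routing_ok_nil (R : realDomainType) n (G : multigraph n) :
  routing_ok (G := G) [::] (0 : 'M[R]_n).
Proof.
split=> //; split=> [u v|e]; rewrite big_nil ?mxE //.
by rewrite invr_ge0 ler0n.
Qed.

Lemma sup_achievable_le (R : realType) n (host : 'M[R]_n -> Prop) (M : 'M[R]_n) (B : R) :
  host 0 -> (forall i j, 0 <= M i j) -> 0 < \sum_i \sum_j M i j ->
  (forall A : 'M[R]_n, (forall i j, 0 <= A i j <= M i j) -> host A ->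
     \sum_i \sum_j A i j <= B * \sum_i \sum_j M i j) ->
  sup [set eta | achievable_with host M eta] <= B.
Proof.
move=> host0 M0 Mpos total_le; apply: ge_sup.
  exists 0; exists 0; split; first by move=> i j; rewrite mxE lexx M0.
  split=> //; rewrite mul0r; apply: big1 => i _; apply: big1 => j _.
  by rewrite mxE.
by move=> eta [A [AM [Aeta hA]]]; rewrite -(ler_pM2r Mpos) -Aeta total_le.
Qed.

Lemma sumr_ord2 (V : nmodType) (F : 'I_2 -> V) : \sum_(i < 2) F i = F ord0 + F ord_max.
Proof. by rewrite big_ord_recl big_ord1; congr (_ + F _); apply: val_inj. Qed.

Lemma ord2_cases (i : 'I_2) : i = ord0 \/ i = ord_max.
Proof. by case: i => [[|[|//]] ?]; [left | right]; apply: val_inj. Qed.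

Section TwoVertices.
Variable R : realType.

Definition N2 : 'M[R]_2 := \matrix_(i, j) (if i == j then 5 / 9 else 4 / 9).

Let e01 : (ord0 == ord_max :> 'I_2) = false. Proof. by []. Qed.
Let e10 : (ord_max == ord0 :> 'I_2) = false. Proof. by []. Qed.

Lemma N2_doubly_stochastic : doubly_stochastic N2.
Proof.
split; first by move=> i j; rewrite mxE; case: ifP => _; lra.
by split=> i; rewrite sumr_ord2 !mxE; case: (ord2_cases i) => ->;
  rewrite eqxx ?e01 ?e10; lra.
Qed.

Lemma hosted_total_le_N2 (G : multigraph 2) (A : 'M[R]_2) :
  directed_regular G 3 -> (forall i j, 0 <= A i j <= N2 i j) -> hosts G A ->
  \sum_i \sum_j A i j <= 8 / 9 * \sum_i \sum_j N2 i j.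
Proof.
move=> reg AN hA.
have out_deg (u : 'I_2) : (mult G u ord0)%:R + (mult G u ord_max)%:R = 3 :> R.
  by rewrite -(sumr_ord2 (fun v => (mult G u v)%:R)) -natr_sum -card_out_arcs (reg u).1.
have in_deg0 : (mult G ord0 ord0)%:R + (mult G ord_max ord0)%:R = 3 :> R.
  by rewrite -(sumr_ord2 (fun u => (mult G u ord0)%:R)) -natr_sum -card_in_arcs (reg ord0).2.
have out0 := out_deg ord0; have out1 := out_deg ord_max.
have := AN ord0 ord0; have := AN ord0 ord_max.
have := AN ord_max ord0; have := AN ord_max ord_max.
rewrite !mxE !eqxx e01 e10 => /andP[? ?] /andP[? ?] /andP[? ?] /andP[? ?].
have three : (2 * 2 - 1)%N%:R = 3 :> R by [].
have [few|many] := leqP (mult G ord0 ord0) 1.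
  have := hosted_total_le_dual hA (dual_feasible_halving _ G).
  have : (mult G ord0 ord0)%:R <= 1 :> R by rewrite lern1.
  rewrite sum_arc_weight !sumr_ord2 !mxE /halving_arc_cost /halving_pair_cost.
  by rewrite !eqxx e01 e10 three; lra.
have := hosted_total_le_dual hA (dual_feasible_cross _ G).
have : 2 <= (mult G ord0 ord0)%:R :> R by rewrite ler_nat.
rewrite sum_arc_weight !sumr_ord2 !mxE /cross_arc_cost /diag_pair_cost.
by rewrite !eqxx e01 e10 three; lra.
Qed.

Lemma weak_throughput_N2_le (G : multigraph 2) :
  directed_regular G 3 -> weak_throughput G N2 <= 8 / 9.
Proof.
move=> reg; apply: sup_achievable_le => [|||A AN]; last exact: hosted_total_le_N2.
- by exists [::]; apply: routing_ok_nil.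
- by case: N2_doubly_stochastic.
- by rewrite !sumr_ord2 !mxE !eqxx e01 e10; lra.
Qed.

End TwoVertices.

Definition direct_row_cap (n : nat) : nat := (if odd n then 7 * n - 3 else 7 * n - 4)%N.

Section HeavyDiagonal.
Variable R : realFieldType.

Lemma direct_row_capE n : (0 < n)%N ->
  (direct_row_cap n)%:R = 7 * n%:R - 4 + (odd n)%:R :> R.
Proof.
move=> n0; rewrite /direct_row_cap.
by case: (odd n); rewrite natrB ?natrM /=; first [lra | lia].
Qed.

Lemma parity_row_bound n (j : nat) (x : R) : (0 < n)%N ->
  x <= (3 * n%:R - 1) / 2 -> x + j%:R <= 2 * n%:R - 1 ->
  4 * x + 2 * j%:R <= (direct_row_cap n)%:R.
Proof.
move=> n0 x_le x_j; rewrite direct_row_capE //.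
have n_half : n%:R = 2 * (n./2)%:R + (odd n)%:R :> R.
  by rewrite -{1}(odd_double_half n) natrD -muln2 natrM; lra.
have odd_ge0 : 0 <= (odd n)%:R :> R := ler0n _ _.
have [j_lt|j_ge] := ltnP j n./2.
  have : j%:R + 1 <= (n./2)%:R :> R by rewrite natr1 ler_nat.
  lra.
have : (n./2)%:R <= j%:R :> R by rewrite ler_nat.
lra.
Qed.

Lemma row_sum_le_direct_row_cap n (u : 'I_n) (c : 'I_n -> nat) (x : 'I_n -> R) :
  (0 < n)%N -> (\sum_v c v = 2 * n - 1)%N -> (forall v, x v <= (c v)%:R) ->
  x u <= (3 * n%:R - 1) / 2 -> (forall v, v != u -> x v <= 2^-1) ->
  4 * \sum_v x v <= (direct_row_cap n)%:R.
Proof.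
move=> n0 c_sum x_c x_u x_half.
pose j := (\sum_(v | v != u) (0 < c v))%N.
have off_le : 2 * \sum_(v | v != u) x v <= j%:R.
  rewrite /j natr_sum mulr_sumr; apply: ler_sum => v vu.
  by have := x_c v; have := x_half v vu; case: (c v) => [|k] /=; lra.
have budget : x u + j%:R <= 2 * n%:R - 1.
  have : (c u + j <= 2 * n - 1)%N.
    by rewrite -c_sum (bigD1 u) //= leq_add2l; apply: leq_sum => v _; case: (c v).
  by rewrite -(ler_nat R) natrD natrB ?muln_gt0 // natrM; have := x_c u; lra.
by rewrite (bigD1 u) //=; have := parity_row_bound n0 x_u budget; lra.
Qed.

Definition heavy_diag_mx n : 'M[R]_n :=
  \matrix_(i, j) if i == j then (3 * n%:R - 1) / (2 * (2 * n%:R - 1))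
                 else (2 * (2 * n%:R - 1))^-1.

Lemma heavy_diag_mx_sym n i j : heavy_diag_mx n i j = heavy_diag_mx n j i.
Proof. by rewrite !mxE eq_sym. Qed.

Lemma heavy_diag_mx_row_sum n i : \sum_j heavy_diag_mx n i j = 1.
Proof.
have n0 : (0 < n)%N := leq_ltn_trans (leq0n i) (ltn_ord i).
have n1 : 1 <= n%:R :> R by rewrite ler1n.
rewrite (bigD1 i) //= mxE eqxx.
rewrite (eq_bigr (fun _ => (2 * (2 * n%:R - 1))^-1)) => [|j ji]; last first.
  by rewrite mxE eq_sym (negbTE ji).
rewrite (eq_bigl (fun j => j \in [set~ i])) => [|j]; last by rewrite !inE.
by rewrite sumr_const cardsC1 card_ord -[_ *+ n.-1]mulr_natr -subn1 natrB //; field; lra.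
Qed.

Lemma heavy_diag_mx_doubly_stochastic n : doubly_stochastic (heavy_diag_mx n).
Proof.
split; [|split=> i].
- move=> i j; have n1 : 1 <= n%:R :> R.
    by rewrite ler1n; apply: leq_ltn_trans (leq0n i) (ltn_ord i).
  by rewrite mxE; case: ifP => _; [apply: divr_ge0 | rewrite invr_ge0]; lra.
- exact: heavy_diag_mx_row_sum.
- by under eq_bigr do rewrite heavy_diag_mx_sym; apply: heavy_diag_mx_row_sum.
Qed.

Lemma heavy_diag_mx_total n : \sum_i \sum_j heavy_diag_mx n i j = n%:R.
Proof.
by under eq_bigr do rewrite heavy_diag_mx_row_sum; rewrite sumr_const card_ord.
Qed.

Lemma direct_hosted_total_le n (G : multigraph n) (A : 'M[R]_n) :
  (0 < n)%N -> directed_regular G (2 * n - 1) ->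
  (forall i j, 0 <= A i j <= heavy_diag_mx n i j) -> directly_hosts G A ->
  \sum_i \sum_j A i j <=
  (direct_row_cap n)%:R / (8 * n - 4)%N%:R * \sum_i \sum_j heavy_diag_mx n i j.
Proof.
move=> n0 reg AM hA.
have n1 : 1 <= n%:R :> R by rewrite ler1n.
have capE : (2 * n - 1)%N%:R = 2 * n%:R - 1 :> R by rewrite natrB ?muln_gt0 // natrM.
have cap_gt0 : 0 < 2 * n%:R - 1 :> R by lra.
have row u : \sum_v A u v <= (direct_row_cap n)%:R / (4 * (2 * n%:R - 1)).
  rewrite ler_pdivlMr ?mulr_gt0 // mulrCA mulr_suml.
  apply: (row_sum_le_direct_row_cap (u := u) (c := mult G u)) => //.
  - by rewrite -card_out_arcs; case: (reg u).
  - by move=> v; rewrite -ler_pdivlMr // -capE; apply: direct_demand_le_mult.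
  - rewrite -ler_pdivlMr // -mulrA -invfM.
    by case/andP: (AM u u) => _ Auu; rewrite mxE eqxx in Auu.
  - move=> v vu; rewrite -ler_pdivlMr // -invfM.
    by case/andP: (AM u v) => _ Auv; rewrite mxE eq_sym (negbTE vu) in Auv.
rewrite heavy_diag_mx_total natrB ?natrM; last by lia.
apply: le_trans (ler_sum _ (fun u _ => row u)) _.
by rewrite sumr_const card_ord -mulr_natr le_eqVlt; apply/orP; left; apply/eqP; field; lra.
Qed.

End HeavyDiagonal.

Lemma weak_direct_throughput_heavy_diag_le (R : realType) n (G : multigraph n) :
  (0 < n)%N -> directed_regular G (2 * n - 1) ->
  weak_direct_throughput G (heavy_diag_mx R n) <=
  (direct_row_cap n)%:R / (8 * n - 4)%N%:R.
Proof.
move=> n0 reg; apply: sup_achievable_le => [|||A AM]; last exact: direct_hosted_total_le.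
- by exists [::]; split=> //; apply: routing_ok_nil.
- by case: (heavy_diag_mx_doubly_stochastic R n).
- by rewrite heavy_diag_mx_total ltr0n.
Qed.

Theorem proposition4p4 (R : realType) :
  (exists N : 'M[R]_2,
     doubly_stochastic N /\
     forall kappa : R, 8 / 9 < kappa ->
     forall G : multigraph 2, directed_regular G 3 ->
       ~ (kappa <= weak_throughput G N)) /\
  (forall n : nat, (0 < n)%N ->
     exists M : 'M[R]_n,
       doubly_stochastic M /\
       forall kappa : R,
         (if odd n then (7 * n - 3)%N%:R / (8 * n - 4)%N%:R
          else (7 * n - 4)%N%:R / (8 * n - 4)%N%:R) < kappa ->
       forall G : multigraph n, directed_regular G (2 * n - 1) ->
         ~ (kappa <= weak_direct_throughput G M)).
Proof.
split.
  exists (N2 R); split=> [|kappa kappa_gt G reg kappa_le].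
    exact: N2_doubly_stochastic.
  have := le_trans kappa_le (weak_throughput_N2_le R reg).
  by rewrite leNgt kappa_gt.
move=> n n0; exists (heavy_diag_mx R n).
split=> [|kappa kappa_gt G reg kappa_le].
  exact: heavy_diag_mx_doubly_stochastic.
have := le_trans kappa_le (weak_direct_throughput_heavy_diag_le R n0 reg).
by rewrite leNgt /direct_row_cap; case: (odd n) kappa_gt => ->.
Qed.
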